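(* Under the hypotheses of the previous lemma, assume additionally that $\boldsymbol{\Sigma}_k$ is positive semidefinite. Then for all $\boldsymbol{w}=(\boldsymbol{x},\boldsymbol{\lambda})\in\Omega$, $$f(\boldsymbol{x})-f(\tilde{\boldsymbol{x}}^k)+(\boldsymbol{w}-\tilde{\boldsymbol{w}}^k)^T\boldsymbol{\Gamma}(\boldsymbol{w})+\frac1{2\gamma}\Big(\|\boldsymbol{w}-\boldsymbol{w}^k\|_{\boldsymbol{\Sigma}_k}^2-\|\boldsymbol{w}-\boldsymbol{w}^{k+1}\|_{\boldsymbol{\Sigma}_k}^2\Big)\ge 0.$$
   Context: Setting: $\mathcal{X}\subset\mathbb{R}^n$ nonempty closed convex; $f$ convex; $\phi_i$ convex, continuously differentiable; $\Phi=(\phi_1,\dots,\phi_m)^T$, Jacobian $\mathcal{D}\Phi$; $\Omega=\mathcal{X}\times\mathbb{R}^m_+$; $\boldsymbol{\Gamma}(\boldsymbol{w})=(\mathcal{D}\Phi(\boldsymbol{x})^T\boldsymbol{\lambda},-\Phi(\boldsymbol{x}))$. Hypotheses of the previous lemma: $\gamma\in(0,2)$, $r_k,s_k>0$, $\tilde{\boldsymbol{w}}^k\in\Omega$ satisfies $f(\boldsymbol{x})-f(\tilde{\boldsymbol{x}}^k)+(\boldsymbol{w}-\tilde{\boldsymbol{w}}^k)^T\{\boldsymbol{\Gamma}(\tilde{\boldsymbol{w}}^k)+\boldsymbol{\Sigma}_k(\tilde{\boldsymbol{w}}^k-\boldsymbol{w}^k)\}\ge0$ for all $\boldsymbol{w}\in\Omega$,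 $\boldsymbol{w}^{k+1}=\boldsymbol{w}^k-\gamma(\boldsymbol{w}^k-\tilde{\boldsymbol{w}}^k)$, where $\boldsymbol{\Sigma}_k=\begin{pmatrix} r_k\boldsymbol{I}_n & -\mathcal{D}\Phi(\tilde{\boldsymbol{x}}^k)^T\\ -\mathcal{D}\Phi(\tilde{\boldsymbol{x}}^k) & s_k\boldsymbol{I}_m\end{pmatrix}$; $\|\boldsymbol{v}\|_{\boldsymbol{H}}^2=\boldsymbol{v}^T\boldsymbol{H}\boldsymbol{v}$. *)

From HB Require Import structures.
From mathcomp Require Import all_boot all_order all_algebra.
From mathcomp Require Import all_classical all_reals all_analysis.
Set Implicit Arguments. Unset Strict Implicit. Unset Printing Implicit Defensive.
Import Order.TTheory GRing.Theory Num.Theory.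
Import numFieldNormedType.Exports.
Local Open Scope classical_set_scope.
Local Open Scope ring_scope.

Section Defs.
Variable R : realType.

Definition convex_set_cv {n : nat} (X : set 'cV[R]_n) : Prop :=
  forall x y (t : R), X x -> X y -> 0 <= t -> t <= 1 ->
    X (t *: x + (1 - t) *: y).

Definition convex_fun_cv {n : nat} (f : 'cV[R]_n -> R) : Prop :=
  forall x y (t : R), 0 <= t -> t <= 1 ->
    f (t *: x + (1 - t) *: y) <= t * f x + (1 - t) * f y.

Definition jacPhi {n m : nat} (phi : 'I_m -> 'cV[R]_n -> R)
  (x : 'cV[R]_n) : 'M[R]_(m, n) :=
  \matrix_(i < m, j < n) ('d (phi i) x) (delta_mx j 0 : 'cV[R]_n).

Definition PhiV {n m : nat} (phi : 'I_m -> 'cV[R]_n -> R) (x : 'cV[R]_n)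
  : 'cV[R]_m := \col_(i < m) phi i x.

Definition GammaOp {n m : nat} (phi : 'I_m -> 'cV[R]_n -> R)
  (x : 'cV[R]_n) (lam : 'cV[R]_m) : 'cV[R]_(n + m) :=
  col_mx ((jacPhi phi x)^T *m lam) (- PhiV phi x).

Definition Sigma {n m : nat} (phi : 'I_m -> 'cV[R]_n -> R) (r s : R)
  (xt : 'cV[R]_n) : 'M[R]_(n + m) :=
  block_mx (r%:M) (- (jacPhi phi xt)^T) (- jacPhi phi xt) (s%:M).

Definition mnorm2 {p : nat} (H : 'M[R]_p) (v : 'cV[R]_p) : R :=
  (v^T *m H *m v) 0 0.

Definition psd {p : nat} (H : 'M[R]_p) : Prop :=
  forall v : 'cV[R]_p, 0 <= mnorm2 H v.

Definition dotc {p : nat} (a b : 'cV[R]_p) : R := (a^T *m b) 0 0.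

Definition nonneg {m : nat} (lam : 'cV[R]_m) : Prop := forall i, 0 <= lam i 0.

End Defs.

From HB Require Import structures.
From mathcomp Require Import all_boot all_order all_algebra.
From mathcomp Require Import all_classical all_reals all_analysis.
From mathcomp Require Import lra ring.
Import Order.TTheory GRing.Theory Num.Theory.
Import numFieldNormedType.Exports.
Local Open Scope classical_set_scope.
Local Open Scope ring_scope.

(* First, Gamma is monotone on Omega: by the gradient
   inequality for each convex phi_i, the i-th term of
   (w - w')^T (Gamma w - Gamma w') is lam_i times one Bregman gap of phi_i plus
   lam'_i times another, both nonnegative.  Hence Gamma(w~) may be replaced by
   Gamma(w) in the variational inequality.  Second, for symmetric Sigma, with
   e = w - w^k and d = w~ - w^k, expanding the two squared norms gives
   (1/2g)(|e|^2 - |e - g d|^2) - (e - d)^T Sigma d = (1 - g/2) |d|^2 >= 0. *)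

Section DotProduct.
Context {R : realType} {p : nat}.
Implicit Types (a b c : 'cV[R]_p) (S : 'M[R]_p).

Lemma dotcE a b : dotc a b = \sum_i a i 0 * b i 0.
Proof. by rewrite /dotc mxE; apply: eq_bigr => i _; rewrite mxE. Qed.

Lemma dotcDr a b c : dotc c (a + b) = dotc c a + dotc c b.
Proof. by rewrite /dotc mulmxDr mxE. Qed.

Lemma dotcBl a b c : dotc (a - b) c = dotc a c - dotc b c.
Proof. by rewrite /dotc raddfB /= mulmxBl !mxE. Qed.

Lemma dotcBr a b c : dotc c (a - b) = dotc c a - dotc c b.
Proof. by rewrite /dotc mulmxBr !mxE. Qed.

Lemma dotcZl (k : R) a c : dotc (k *: a) c = k * dotc a c.
Proof. by rewrite /dotc linearZ /= -scalemxAl mxE. Qed.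

Lemma dotcZr (k : R) a c : dotc c (k *: a) = k * dotc c a.
Proof. by rewrite /dotc -scalemxAr mxE. Qed.

Lemma mnorm2_dotc S a : mnorm2 S a = dotc a (S *m a).
Proof. by rewrite /mnorm2 /dotc mulmxA. Qed.

Lemma mnorm2Z S (k : R) a : mnorm2 S (k *: a) = k ^+ 2 * mnorm2 S a.
Proof. by rewrite !mnorm2_dotc -scalemxAr dotcZl dotcZr mulrA expr2. Qed.

Lemma dotc_sym_mx S a b : S^T = S -> dotc a (S *m b) = dotc b (S *m a).
Proof.
move=> symS; rewrite /dotc [RHS](_ : _ = ((b^T *m (S *m a))^T) 0 0).
  by rewrite !trmx_mul trmxK symS mulmxA.
by rewrite [in RHS]mxE.
Qed.

Lemma mnorm2B S a b : S^T = S ->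
  mnorm2 S (a - b) = mnorm2 S a - 2 * dotc a (S *m b) + mnorm2 S b.
Proof.
move=> symS; rewrite !mnorm2_dotc mulmxBr !dotcBl !dotcBr (dotc_sym_mx S b a symS).
by ring.
Qed.

End DotProduct.

Lemma dotc_col_mx {R : realType} {n m : nat} (a c : 'cV[R]_n) (b d : 'cV[R]_m) :
  dotc (col_mx a b) (col_mx c d) = dotc a c + dotc b d.
Proof. by rewrite /dotc tr_col_mx mul_row_col mxE. Qed.

Lemma dotc_trmx {R : realType} {n m : nat} (A : 'M[R]_(m, n)) u l :
  dotc u (A^T *m l) = dotc (A *m u) l.
Proof. by rewrite /dotc trmx_mul mulmxA. Qed.

Lemma dotc_le_relaxed_mnorm2 {R : realType} {p : nat} {S : 'M[R]_p} {g : R}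
    (w wk wt : 'cV[R]_p) :
  S^T = S -> psd S -> 0 < g -> g < 2 ->
  dotc (w - wt) (S *m (wt - wk)) <=
  (2 * g)^-1 * (mnorm2 S (w - wk) - mnorm2 S (w - (wk - g *: (wk - wt)))).
Proof.
move=> symS psdS g0 g2.
set e := w - wk; set d := wt - wk.
have -> : w - wt = e - d by rewrite /e /d opprB addrA subrK.
have -> : w - (wk - g *: (wk - wt)) = e - g *: d.
  by rewrite /e /d -[wt - wk]opprB scalerN opprK opprB addrA addrAC.
clearbody e d.
rewrite mnorm2B // mnorm2Z -scalemxAr dotcZr dotcBl -mnorm2_dotc.
have -> : (2 * g)^-1 * (mnorm2 S e - (mnorm2 S e - 2 * (g * dotc e (S *m d))
            + g ^+ 2 * mnorm2 S d)) = dotc e (S *m d) - g / 2 * mnorm2 S d.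
  by field; rewrite lt0r_neq0.
by have := psdS d; nra.
Qed.

Lemma convex_fun_grad_le {R : realType} {n : nat} {g : 'cV[R]_n -> R} {x : 'cV[R]_n}
    (y : 'cV[R]_n) :
  convex_fun_cv g -> differentiable g x -> g x + 'd g x (y - x) <= g y.
Proof.
move=> cvx_g dg; rewrite -deriveE // addrC -lerBrDr.
have quot_cvg : (fun h : R => h^-1 *: ((g \o shift x) (h *: (y - x)) - g x))
    @ 0^'+ --> derive g x (y - x).
  move=> A HA; have := @diff_derivable _ _ _ _ _ (y - x) dg A HA.
  rewrite /= !near_simpl /= !near_withinE; apply: filterS => h P hp.
  by apply: P; rewrite /= lt0r_neq0.
apply: (cvgr_to_le quot_cvg); near=> h.
have hp : 0 < h by near: h; exact: nbhs_right_gt.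
have h1 : h <= 1 by near: h; apply: nbhs_right_le; exact: ltr01.
rewrite /= -[X in _ <= X]mul1r -[in X in _ <= X](mulVf (lt0r_neq0 hp)).
rewrite -mulrA ler_pM2l ?invr_gt0 //.
have := cvx_g y x h (ltW hp) h1.
have -> : h *: y + (1 - h) *: x = h *: (y - x) + x.
  by rewrite scalerBl scale1r scalerBr [x - _]addrC addrA.
lra.
Unshelve. all: by end_near.
Qed.

Section Monotonicity.
Context {R : realType} {n m : nat} {phi : 'I_m -> 'cV[R]_n -> R}.
Hypotheses (cvx_phi : forall i, convex_fun_cv (phi i))
  (diff_phi : forall i x, differentiable (phi i) x).

Lemma jacPhi_mulmx (x v : 'cV[R]_n) i : (jacPhi phi x *m v) i 0 = 'd (phi i) x v.
Proof.
rewrite mxE {2}(matrix_sum_delta v) linear_sum; apply: eq_bigr => j _.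
by rewrite big_ord1 linearZ /= mxE mulrC.
Qed.

Lemma phi_bregman_ge0 (x y : 'cV[R]_n) i :
  0 <= phi i y - phi i x - (jacPhi phi x *m (y - x)) i 0.
Proof.
rewrite jacPhi_mulmx -addrA -opprD subr_ge0.
exact: (convex_fun_grad_le y (cvx_phi i) (diff_phi i x)).
Qed.

Lemma GammaOp_monotone (x xt : 'cV[R]_n) (lam lt : 'cV[R]_m) :
  nonneg lam -> nonneg lt ->
  0 <= dotc (col_mx x lam - col_mx xt lt) (GammaOp phi x lam - GammaOp phi xt lt).
Proof.
have weighted_sum_ge0 (a b l l' u v : R) : 0 <= l -> 0 <= l' ->
    0 <= v - u + a -> 0 <= u - v - b -> 0 <= a * l - b * l' + (l - l') * (v - u).
  by move=> *; nra.
move=> lam_ge0 lt_ge0.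
rewrite /GammaOp !opp_col_mx !add_col_mx dotc_col_mx dotcBr.
rewrite [X in X - _ + _]dotc_trmx [X in _ - X + _]dotc_trmx.
rewrite [X in X - _ + _]dotcE [X in _ - X + _]dotcE [X in _ + X]dotcE.
rewrite -sumrB -big_split; apply: sumr_ge0 => i _ /=.
have -> : (lam - lt) i 0 = lam i 0 - lt i 0 by rewrite !mxE.
have -> : (- PhiV phi x - - PhiV phi xt) i 0 = phi i xt - phi i x.
  by rewrite !mxE opprK addrC.
have Bx := phi_bregman_ge0 x xt i.
rewrite -[xt - x]opprB mulmxN mxE opprK in Bx.
have Bxt := phi_bregman_ge0 xt x i.
exact: weighted_sum_ge0 (lam_ge0 i) (lt_ge0 i) Bx Bxt.
Qed.

End Monotonicity.

Lemma Sigma_sym {R : realType} {n m : nat} (phi : 'I_m -> 'cV[R]_n -> R) r s xt :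
  (Sigma phi r s xt)^T = Sigma phi r s xt.
Proof. by rewrite /Sigma tr_block_mx !tr_scalar_mx !linearN /= trmxK. Qed.

Theorem mainTheorem5 (R : realType) (n m : nat)
  (X : set 'cV[R]_n) (f : 'cV[R]_n -> R) (phi : 'I_m -> 'cV[R]_n -> R)
  (gamma r s : R) (xk xt : 'cV[R]_n) (lk lt : 'cV[R]_m) (w1 : 'cV[R]_(n + m)) :
  X !=set0 -> closed X -> convex_set_cv X ->
  convex_fun_cv f ->
  (forall i, convex_fun_cv (phi i)) ->
  (forall i x, differentiable (phi i) x) ->
  (forall i j, continuous (fun x => jacPhi phi x i j)) ->
  0 < gamma -> gamma < 2 -> 0 < r -> 0 < s ->
  X xt -> nonneg lt ->
  (forall (x : 'cV[R]_n) (lam : 'cV[R]_m), X x -> nonneg lam ->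
     0 <= f x - f xt
          + dotc (col_mx x lam - col_mx xt lt)
                 (GammaOp phi xt lt
                  + Sigma phi r s xt *m (col_mx xt lt - col_mx xk lk))) ->
  w1 = col_mx xk lk - gamma *: (col_mx xk lk - col_mx xt lt) ->
  psd (Sigma phi r s xt) ->
  forall (x : 'cV[R]_n) (lam : 'cV[R]_m), X x -> nonneg lam ->
    0 <= f x - f xt
         + dotc (col_mx x lam - col_mx xt lt) (GammaOp phi x lam)
         + (2 * gamma)^-1 *
             (mnorm2 (Sigma phi r s xt) (col_mx x lam - col_mx xk lk)
              - mnorm2 (Sigma phi r s xt) (col_mx x lam - w1)).
Proof.
move=> _ _ _ _ cvx_phi diff_phi _ g0 g2 _ _ _ lt_ge0 vi_wt -> psdS x lam Xx lam_ge0.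
have vi := vi_wt x lam Xx lam_ge0; rewrite dotcDr in vi.
have mono := GammaOp_monotone cvx_phi diff_phi x xt lam lt lam_ge0 lt_ge0.
rewrite dotcBr in mono.
have relax := dotc_le_relaxed_mnorm2 (col_mx x lam) (col_mx xk lk) (col_mx xt lt)
  (Sigma_sym phi r s xt) psdS g0 g2.
lra.
Qed.
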